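(* Consider the two-player non-cooperative pricing game $\langle \mathcal{R}, (P_i)_{i\in\mathcal{R}}, (U_i)_{i\in\mathcal{R}}\rangle$ between two multi-homing mobile devices (MMD relays) $\mathcal{R}=\{r_1,r_2\}$, in which the strategy of player $r_i$ is its charging price $p_{r_i}\in[0,+\infty)$ and, with the offered bandwidths $\omega_1,\omega_2>0$ held fixed, the utility of player $r_i$ ($i\in\{1,2\}$, $j\neq i$) is $$U_i(p_{r_i},p_{r_j}) \;=\; p_{r_i}\cdot \frac{n}{1+2^{\,p_{r_i}-p_{r_j}}\,\dfrac{\omega_j Y_j}{\omega_i Y_i}} \;-\; c_i\,\omega_i .$$ Then this game has a pure-strategy Nash equilibrium.
   Context: Here $n>0$ is the total number of ordinary mobile devices (OMDs) in the system, and the expression $n/(1+2^{p_{r_i}-p_{r_j}}\omega_jY_j/(\omega_iY_i))$ is the number of OMDs attached to $r_i$ at the evolutionary equilibrium of the OMDs' relay-selection game. $c_i\ge 0$ is the relay cost of $r_i$ per unit bandwidth. $Y_i=\max\{\tau_i,b_i\}>0$ is a channel-quality constant, where $b_i=1+SNR_{s_i d_i}$, $\tau_i=1+SNR_{s_i d_i}+SNR_{s_i r_i d_i}$, with $SNR_{s_i d_i}=P|h_{s_id_i}|^2/\sigma^2$ and $SNR_{s_ir_id_i}=\frac{P^2|h_{s_ir_i}|^2|h_{r_id_i}|^2}{\sigma^2(\sigma^2+P|h_{s_ir_i}|^2+P|h_{r_id_i}|^2)}$ (transmit power $P>0$, noise variance $\sigma^2>0$, channel gains $h$ between source $s_i$,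 relay $r_i$, destination $d_i$). A pure Nash equilibrium is a pair $(p_{r_1}^*,p_{r_2}^* )$ such that for each $i$, $U_i(p_{r_i}^*,p_{r_j}^* )\ge U_i(p_{r_i},p_{r_j}^* )$ for all $p_{r_i}\ge 0$. *)

From Stdlib Require Import Reals.
Open Scope R_scope.

(* Channel-gain squared magnitudes |h|^2 are given as nonnegative reals. *)
Definition SNR_direct (P sigma2 g_sd : R) : R := P * g_sd / sigma2.

Definition SNR_relay (P sigma2 g_sr g_rd : R) : R :=
  (P ^ 2 * g_sr * g_rd) / (sigma2 * (sigma2 + P * g_sr + P * g_rd)).

Definition b_const (P sigma2 g_sd : R) : R := 1 + SNR_direct P sigma2 g_sd.

Definition tau_const (P sigma2 g_sd g_sr g_rd : R) : R :=
  1 + SNR_direct P sigma2 g_sd + SNR_relay P sigma2 g_sr g_rd.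

Definition Y_const (P sigma2 g_sd g_sr g_rd : R) : R :=
  Rmax (tau_const P sigma2 g_sd g_sr g_rd) (b_const P sigma2 g_sd).

Definition utility (n c_i w_i Y_i w_j Y_j p_i p_j : R) : R :=
  p_i * (n / (1 + Rpower 2 (p_i - p_j) * (w_j * Y_j / (w_i * Y_i)))) - c_i * w_i.

Definition is_pure_NE (U1 U2 : R -> R -> R) (p1 p2 : R) : Prop :=
  0 <= p1 /\ 0 <= p2 /\
  (forall q1, 0 <= q1 -> U1 p1 p2 >= U1 q1 p2) /\
  (forall q2, 0 <= q2 -> U2 p2 p1 >= U2 q2 p1).

From Stdlib Require Import Reals Lra.
Open Scope R_scope.

(* Since [exp] lies above its tangents, a stationary point of the revenue
   [p / (1 + b 2^p)] is its global maximum, so the first-order condition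
   characterises best responses.  At a joint stationary point the two
   relative loads [x1 = 2^(p1-p2) r1] and [x2 = 2^(p2-p1) r2] are inverse to
   each other; this pins down [p2 = (1 + x) / ln 2], [p1 = p2 / x] and reduces
   the equilibrium to one scalar equation in [u = (p1 - p2) ln 2], solved by
   the intermediate value theorem. *)

Lemma ln2_pos : 0 < ln 2.
Proof. pose proof ln_lt_2; lra. Qed.

Lemma Y_const_pos P sigma2 g_sd g_sr g_rd :
  0 < P -> 0 < sigma2 -> 0 <= g_sd -> 0 < Y_const P sigma2 g_sd g_sr g_rd.
Proof.
  intros HP Hs Hg.
  assert (Hsnr : 0 <= SNR_direct P sigma2 g_sd).
  { unfold SNR_direct, Rdiv.
    apply Rmult_le_pos; [nra | left; apply Rinv_0_lt_compat; lra]. }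
  apply Rlt_le_trans with (2 := Rmax_r _ _).
  unfold b_const; lra.
Qed.

Lemma ratio_le_at_stationary (k b p q : R) :
  0 < k -> 0 < b ->
  k * p * (b * exp (k * p)) = 1 + b * exp (k * p) ->
  q / (1 + b * exp (k * q)) <= p / (1 + b * exp (k * p)).
Proof.
  intros Hk Hb Hstat.
  assert (Hsplit : b * exp (k * q) = b * exp (k * p) * exp (k * (q - p))).
  { rewrite Rmult_assoc, <- exp_plus; f_equal; f_equal; ring. }
  rewrite Hsplit.
  pose proof (exp_ineq1_le (k * (q - p))) as Htangent.
  pose proof (exp_pos (k * p)) as Hep.
  pose proof (exp_pos (k * (q - p))) as Heqp.
  set (x := b * exp (k * p)) in *.
  set (e := exp (k * (q - p))) in *.
  assert (Hx : 0 < x) by (unfold x; nra).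
  clearbody x e.
  assert (Hkqx : k * q * x <= 1 + x * e) by nra.
  apply Rmult_le_reg_r with ((1 + x * e) * (1 + x)); [nra|].
  unfold Rdiv.
  replace (q * / (1 + x * e) * ((1 + x * e) * (1 + x))) with (q * (1 + x))
    by (field; nra).
  replace (p * / (1 + x) * ((1 + x * e) * (1 + x))) with (p * (1 + x * e))
    by (field; nra).
  apply Rmult_le_reg_r with (k * x); [nra|].
  replace (p * (1 + x * e) * (k * x)) with (k * p * x * (1 + x * e)) by ring.
  rewrite Hstat.
  replace (q * (1 + x) * (k * x)) with ((1 + x) * (k * q * x)) by ring.
  apply Rmult_le_compat_l; lra.
Qed.

(* First-order condition for maximising [p / (1 + x)], [x = 2^(p - pj) r]. *)
Definition stationary_price (r p pj : R) : Prop :=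
  p * ln 2 * (Rpower 2 (p - pj) * r) = 1 + Rpower 2 (p - pj) * r.

Lemma utility_max_at_stationary_price n c wi Yi wj Yj p pj q :
  0 <= n -> 0 < wj * Yj / (wi * Yi) ->
  stationary_price (wj * Yj / (wi * Yi)) p pj ->
  utility n c wi Yi wj Yj p pj >= utility n c wi Yi wj Yj q pj.
Proof.
  unfold utility, stationary_price.
  set (r := wj * Yj / (wi * Yi)).
  intros Hn Hr Hstat.
  set (b := r * exp (- (pj * ln 2))).
  assert (Hload : forall t, Rpower 2 (t - pj) * r = b * exp (ln 2 * t)).
  { intro t; unfold b, Rpower.
    replace ((t - pj) * ln 2) with (ln 2 * t + - (pj * ln 2)) by ring.
    rewrite exp_plus; ring. }
  rewrite !Hload in *.
  assert (Hratio : q / (1 + b * exp (ln 2 * q)) <= p / (1 + b * exp (ln 2 * p))).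
  { apply ratio_le_at_stationary.
    - exact ln2_pos.
    - unfold b; pose proof (exp_pos (- (pj * ln 2))); nra.
    - rewrite <- Hstat; ring. }
  apply Rle_ge, Rplus_le_compat_r.
  set (Dq := 1 + b * exp (ln 2 * q)) in *.
  set (Dp := 1 + b * exp (ln 2 * p)) in *.
  unfold Rdiv in *.
  replace (q * (n * / Dq)) with (n * (q * / Dq)) by ring.
  replace (p * (n * / Dp)) with (n * (p * / Dp)) by ring.
  apply Rmult_le_compat_l; assumption.
Qed.

Lemma balance_equation_has_root a : 0 < a -> exists u, u + a * exp u = exp (- u) / a.
Proof.
  intros Ha.
  set (f := fun u => u + a * exp u - exp (- u) / a).
  assert (Hinv : 0 < / a) by (apply Rinv_0_lt_compat; lra).
  assert (Hleft : f (- a) < 0).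
  { unfold f; rewrite Ropp_involutive.
    assert (exp (- a) < 1) by (rewrite <- exp_0; apply exp_increasing; lra).
    assert (0 < exp a / a) by (apply Rdiv_lt_0_compat; [apply exp_pos | lra]).
    nra. }
  assert (Hright : 0 < f (/ a)).
  { unfold f.
    assert (exp (- / a) < 1) by (rewrite <- exp_0; apply exp_increasing; lra).
    assert (exp (- / a) / a < / a) by (unfold Rdiv; nra).
    pose proof (exp_pos (/ a)); nra. }
  assert (Hcont : continuity f) by (apply derivable_continuous; unfold f, Rdiv; reg).
  destruct (IVT f (- a) (/ a) Hcont ltac:(lra) Hleft Hright) as [u [_ Hu]].
  exists u; unfold f in Hu; lra.
Qed.

Lemma stationary_prices_exist r1 r2 :
  0 < r1 -> r1 * r2 = 1 ->
  exists p1 p2, 0 <= p1 /\ 0 <= p2 /\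
    stationary_price r1 p1 p2 /\ stationary_price r2 p2 p1.
Proof.
  intros Hr1 Hprod.
  assert (Hr2 : r2 = / r1) by (field_simplify_eq; lra).
  destruct (balance_equation_has_root r1 Hr1) as [u Hu].
  pose proof (exp_pos u) as Heu.
  pose proof ln2_pos as Hln2.
  set (x := r1 * exp u).
  assert (Hx : 0 < x) by (unfold x; nra).
  assert (Hux : u = / x - x).
  { unfold x; rewrite exp_Ropp in Hu; rewrite Rinv_mult.
    unfold Rdiv in Hu; lra. }
  set (p2 := (1 + x) / ln 2).
  set (p1 := p2 / x).
  assert (Hgap : (p1 - p2) * ln 2 = u) by (rewrite Hux; unfold p1, p2; field; lra).
  assert (Hx1 : Rpower 2 (p1 - p2) * r1 = x) by (unfold Rpower, x; rewrite Hgap; ring).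
  assert (Hx2 : Rpower 2 (p2 - p1) * r2 = / x).
  { unfold Rpower, x; replace ((p2 - p1) * ln 2) with (- u) by lra.
    rewrite exp_Ropp, Hr2, Rinv_mult; ring. }
  exists p1, p2; unfold stationary_price; rewrite Hx1, Hx2.
  assert (0 < p2) by (unfold p2; apply Rdiv_lt_0_compat; lra).
  assert (0 < p1) by (unfold p1; apply Rdiv_lt_0_compat; lra).
  repeat split; try lra; unfold p1, p2; field; lra.
Qed.

Theorem theorem1
  (n : nat) (P sigma2 : R)
  (g1_sd g1_sr g1_rd g2_sd g2_sr g2_rd : R)
  (w1 w2 c1 c2 : R) :
  (0 < n)%nat -> 0 < P -> 0 < sigma2 ->
  0 <= g1_sd -> 0 <= g1_sr -> 0 <= g1_rd ->
  0 <= g2_sd -> 0 <= g2_sr -> 0 <= g2_rd ->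
  0 < w1 -> 0 < w2 -> 0 <= c1 -> 0 <= c2 ->
  let Y1 := Y_const P sigma2 g1_sd g1_sr g1_rd in
  let Y2 := Y_const P sigma2 g2_sd g2_sr g2_rd in
  let U1 := fun p1 p2 => utility (INR n) c1 w1 Y1 w2 Y2 p1 p2 in
  let U2 := fun p2 p1 => utility (INR n) c2 w2 Y2 w1 Y1 p2 p1 in
  exists p1 p2 : R, is_pure_NE U1 U2 p1 p2.
Proof.
  intros _ HP Hs Hg1 _ _ Hg2 _ _ Hw1 Hw2 _ _ Y1 Y2 U1 U2.
  assert (HY1 : 0 < Y1) by (apply Y_const_pos; assumption).
  assert (HY2 : 0 < Y2) by (apply Y_const_pos; assumption).
  assert (Hn : 0 <= INR n) by apply pos_INR.
  assert (Hr1 : 0 < w2 * Y2 / (w1 * Y1)) by (apply Rdiv_lt_0_compat; nra).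
  assert (Hr2 : 0 < w1 * Y1 / (w2 * Y2)) by (apply Rdiv_lt_0_compat; nra).
  assert (Hprod : w2 * Y2 / (w1 * Y1) * (w1 * Y1 / (w2 * Y2)) = 1)
    by (field; split; nra).
  destruct (stationary_prices_exist _ _ Hr1 Hprod) as (p1 & p2 & Hp1 & Hp2 & Hst1 & Hst2).
  exists p1, p2; repeat split; try assumption; intros q _;
    apply utility_max_at_stationary_price; assumption.
Qed.
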